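(* Let $A$ be a commutative unital ring, $d$ a derivation of $A$, and $B$ a commutative unital $A$-algebra which is finitely generated and free as an $A$-module. Let $\delta$ be a derivation of $B$ such that the structure map $A\to B$ is a differential homomorphism $(A,d)\to(B,\delta)$. Let $(D,\partial_D)$ be a differential $(B,\delta)$-algebra, i.e. $D$ is a $B$-algebra, $\partial_D$ a derivation of $D$, and the structure map $(B,\delta)\to(D,\partial_D)$ is differential. Let $W(D)$ be the classical Weil descent of $D$ from $B$ to $A$ with unit $W_D:D\to W(D)\otimes_A B$. Then there is a unique derivation $\partial_D^W$ on $W(D)$ such that $(W(D),\partial_D^W)$ is a differential $(A,d)$-algebra and $$W_D:(D,\partial_D)\to (W(D)\otimes_A B,\ \partial_D^W\otimes\delta)$$ is a differential $(B,\delta)$-algebra homomorphism, i.e. $W_D\circ\partial_D=(\partial_D^W\otimes\delta)\circ W_D$. Furthermore, $\partial_D^W$ only depends on $\partial_D$ and not on $\delta$: if $\delta'$ is another derivation of $B$ such that $(B,\delta')$ is a differential $(A,d)$-algebra and $(D,\partial_D)$ is a differential $(B,\delta')$-algebra, then the derivation of $W(D)$ obtained in the same way from $\delta'$ coincides with $\partial_D^W$.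
   Context: All rings and algebras are commutative and unital, homomorphisms unital. Classical Weil descent: for an $A$-algebra $B$ that is free of finite rank as an $A$-module, let $F$ be the functor from $A$-algebras to $B$-algebras, $C\mapsto C\otimes_A B$ (structure map $b\mapsto 1\otimes b$). For a $B$-algebra $D$ the Weil descent is an $A$-algebra $W(D)$ together with a $B$-algebra homomorphism $W_D:D\to W(D)\otimes_A B$ (the unit) such that for every $A$-algebra $C$ and every $B$-algebra homomorphism $f:D\to C\otimes_A B$ there is a unique $A$-algebra homomorphism $g:W(D)\to C$ with $(g\otimes \mathrm{id}_B)\circ W_D=f$; this determines $(W(D),W_D)$ up to unique isomorphism. If $(C,\partial_C)$ is a differential $(A,d)$-algebra (an $A$-algebra with a derivation such that $A\to C$ is a differential map $(A,d)\to(C,\partial_C)$), then $\partial_C\otimes\delta$ denotes the unique derivation on $C\otimes_A B$ such that the natural maps $C\to C\otimes_A B$ and $B\to C\otimes_A B$ are differential. *)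

From mathcomp Require Import all_boot all_algebra.
Set Implicit Arguments.
Unset Strict Implicit.
Unset Printing Implicit Defensive.
Import GRing.Theory.
Local Open Scope ring_scope.

(* Conventions: all rings are commutative unital rings (possibly zero:
   comPzRingType). An R-algebra is a ring S with a structure ring morphism
   R -> S, given explicitly. *)

Definition is_derivation (R : comPzRingType) (d : R -> R) : Prop :=
  (forall x y, d (x + y) = d x + d y) /\
  (forall x y, d (x * y) = d x * y + x * d y).

Definition diff_alg (R S : comPzRingType) (iS : R -> S) (dR : R -> R)
  (dS : S -> S) : Prop :=
  is_derivation dS /\ forall r, dS (iS r) = iS (dR r).

Definition is_basis (A B : comPzRingType) (iB : A -> B) (n : nat)
  (e : 'I_n -> B) (coord : B -> 'I_n -> A) : Prop :=
  (forall b : B, b = \sum_(i < n) iB (coord b i) * e i) /\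
  (forall x : 'I_n -> A, forall k, coord (\sum_(i < n) iB (x i) * e i) k = x k).

(* Model of C (x)_A B for B free with basis e: an element
   sum_i x_i (x) e_i is represented by x : 'I_n -> C. *)
Section Tensor.
Variables (A B C : comPzRingType) (n : nat) (e : 'I_n -> B)
  (coord : B -> 'I_n -> A) (iC : A -> C).

(* multiplication: e_i e_j = sum_k coord (e_i e_j) k e_k *)
Definition tmul (x y : 'I_n -> C) : 'I_n -> C :=
  fun k => \sum_(i < n) \sum_(j < n) x i * y j * iC (coord (e i * e j) k).

(* natural map B -> C (x) B, b |-> 1 (x) b  (its value at 1 is the unit) *)
Definition tembB (b : B) : 'I_n -> C := fun k => iC (coord b k).

(* g (x) id_B for g : C -> C' *)
Definition tmap (C' : comPzRingType) (g : C -> C') (x : 'I_n -> C)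
  : 'I_n -> C' := fun k => g (x k).

(* the derivation dC (x) delta on C (x)_A B :
   (dC (x) delta)(sum_i x_i (x) e_i)
     = sum_i dC x_i (x) e_i + sum_i x_i (x) delta(e_i) *)
Definition tder (dC : C -> C) (delta : B -> B) (x : 'I_n -> C) : 'I_n -> C :=
  fun k => dC (x k) + \sum_(i < n) x i * iC (coord (delta (e i)) k).

End Tensor.

Definition is_Balg_hom (A B C D : comPzRingType) (n : nat) (e : 'I_n -> B)
  (coord : B -> 'I_n -> A) (iC : A -> C) (iD : B -> D)
  (f : D -> 'I_n -> C) : Prop :=
  (forall x y k, f (x + y) k = f x k + f y k) /\
  (forall x y k, f (x * y) k = tmul e coord iC (f x) (f y) k) /\
  (forall b k, f (iD b) k = tembB coord iC b k).

Definition is_Aalg_hom (A W C : comPzRingType) (iW : A -> W) (iC : A -> C)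
  (g : W -> C) : Prop :=
  (forall x y, g (x + y) = g x + g y) /\
  (forall x y, g (x * y) = g x * g y) /\
  g 1 = 1 /\
  (forall a, g (iW a) = iC a).

Definition is_weil_descent (A B D W : comPzRingType) (n : nat)
  (e : 'I_n -> B) (coord : B -> 'I_n -> A) (iD : B -> D) (iW : A -> W)
  (WD : D -> 'I_n -> W) : Prop :=
  is_Balg_hom e coord iW iD WD /\
  forall (C : comPzRingType) (iC : {rmorphism A -> C}) (f : D -> 'I_n -> C),
    is_Balg_hom e coord iC iD f ->
    exists g : W -> C,
      (is_Aalg_hom iW iC g /\ forall x k, tmap g (WD x) k = f x k) /\
      forall g' : W -> C,
        is_Aalg_hom iW iC g' -> (forall x k, tmap g' (WD x) k = f x k) ->
        forall w, g' w = g w.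

Definition weil_derivation (A B D W : comPzRingType) (n : nat)
  (e : 'I_n -> B) (coord : B -> 'I_n -> A) (iW : A -> W) (d : A -> A)
  (delta : B -> B) (dD : D -> D) (WD : D -> 'I_n -> W) (dW : W -> W) : Prop :=
  diff_alg iW d dW /\
  forall x k, WD (dD x) k = tder e coord iW dW delta (WD x) k.

(* A derivation [dW] of [W] compatible with [d] is the same thing as an
   [A]-algebra map [W -> W[eps]], [w |-> w + eps dW w], where the dual numbers
   [W[eps]] are an [A]-algebra through [a |-> a + eps d a].  The map
   [x |-> W_D x + eps (W_D (dD x) - sum_i (W_D x)_i (x) delta e_i)] from [D] to
   [W[eps] (x)_A B] is a [B]-algebra homomorphism: the failure of
   [sum_i x_i (x) delta e_i] to obey Leibniz's rule is exactly compensated by the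
   [d]-part of the [A]-structure of [W[eps]].  By the universal property it
   factors through a unique [A]-algebra map [W -> W[eps]], whose first component
   is the identity and whose second component is the required derivation;
   uniqueness is the uniqueness of that factorization.  The result does not
   depend on [delta] since [1 (x) delta e_i = W_D (dD e_i)]. *)

From HB Require Import structures.
From mathcomp Require Import all_boot all_algebra ring.
Set Implicit Arguments.
Unset Strict Implicit.
Unset Printing Implicit Defensive.
Import GRing.Theory.
Local Open Scope ring_scope.

Definition dualnum (R : comPzRingType) : Type := (R * R)%type.
HB.instance Definition _ (R : comPzRingType) := GRing.Zmodule.on (dualnum R).

Section DualNumbers.
Variable R : comPzRingType.

Definition dualnum_mul (x y : dualnum R) : dualnum R :=
  (x.1 * y.1, x.1 * y.2 + x.2 * y.1).

Lemma dualnum_mulA : associative dualnum_mul.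
Proof. by move=> [a b] [c d] [f g]; congr pair; rewrite /=; ring. Qed.

Lemma dualnum_mulC : commutative dualnum_mul.
Proof. by move=> [a b] [c d]; congr pair; rewrite /=; ring. Qed.

Lemma dualnum_mul1 : left_id ((1, 0) : dualnum R) dualnum_mul.
Proof. by move=> [a b]; congr pair; rewrite /=; ring. Qed.

Lemma dualnum_mulDl : left_distributive dualnum_mul +%R.
Proof. by move=> [a b] [c d] [f g]; congr pair; rewrite /=; ring. Qed.

End DualNumbers.

HB.instance Definition _ (R : comPzRingType) :=
  GRing.Zmodule_isComPzRing.Build (dualnum R)
    (@dualnum_mulA R) (@dualnum_mulC R) (@dualnum_mul1 R) (@dualnum_mulDl R).

Section DualNumberTheory.
Variable R : comPzRingType.
Implicit Types x y : dualnum R.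

Lemma dualnum_addE x y : x + y = (x.1 + y.1, x.2 + y.2).
Proof. by []. Qed.

Lemma dualnum_mulE x y : x * y = (x.1 * y.1, x.1 * y.2 + x.2 * y.1).
Proof. by []. Qed.

Lemma dualnum_sumE (I : Type) (r : seq I) (P : pred I) (F : I -> dualnum R) :
  \sum_(i <- r | P i) F i =
  (\sum_(i <- r | P i) (F i).1, \sum_(i <- r | P i) (F i).2).
Proof.
by rewrite [LHS]surjective_pairing; congr pair; apply: big_morph.
Qed.

End DualNumberTheory.

Section Derivation.
Variables (R : comPzRingType) (d : R -> R) (Hd : is_derivation d).

Lemma derivation0 : d 0 = 0.
Proof. by apply: (addrI (d 0)); rewrite -(proj1 Hd) !addr0. Qed.

Lemma derivation1 : d 1 = 0.
Proof.
apply: (addrI (d 1)); rewrite addr0.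
by have /esym := proj2 Hd 1 1; rewrite !mulr1 mul1r.
Qed.

Lemma derivationB x y : d (x - y) = d x - d y.
Proof.
have dN : d (- y) = - d y.
  by apply: (addrI (d y)); rewrite -(proj1 Hd) !subrr derivation0.
by rewrite (proj1 Hd) dN.
Qed.

Lemma derivation_sum (I : Type) (r : seq I) (P : pred I) (F : I -> R) :
  d (\sum_(i <- r | P i) F i) = \sum_(i <- r | P i) d (F i).
Proof. exact: (big_morph d (proj1 Hd) derivation0). Qed.

End Derivation.

(* The proof of [is_derivation d] is an argument only so that [dual_lift]
   can carry a ring morphism instance. *)
Definition dual_lift (A W : comPzRingType) (iW : {rmorphism A -> W})
  (d : A -> A) of is_derivation d : A -> dualnum W :=
  fun a => (iW a, iW (d a)).

Section DualLift.
Variables (A W : comPzRingType) (iW : {rmorphism A -> W}) (d : A -> A)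
  (Hd : is_derivation d).

Lemma dual_lift_is_zmod_morphism : zmod_morphism (dual_lift iW Hd).
Proof. by move=> x y; rewrite /dual_lift (derivationB Hd) !rmorphB. Qed.

Lemma dual_lift_is_monoid_morphism : monoid_morphism (dual_lift iW Hd).
Proof.
split; first by rewrite /dual_lift (derivation1 Hd) rmorph1 rmorph0.
move=> x y; rewrite /dual_lift dualnum_mulE (proj2 Hd) rmorphD !rmorphM /=.
by congr pair; ring.
Qed.

End DualLift.

HB.instance Definition _ (A W : comPzRingType) (iW : {rmorphism A -> W})
  (d : A -> A) (Hd : is_derivation d) :=
  GRing.isZmodMorphism.Build A (dualnum W) (dual_lift iW Hd)
    (dual_lift_is_zmod_morphism iW Hd).
HB.instance Definition _ (A W : comPzRingType) (iW : {rmorphism A -> W})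
  (d : A -> A) (Hd : is_derivation d) :=
  GRing.isMonoidMorphism.Build A (dualnum W) (dual_lift iW Hd)
    (dual_lift_is_monoid_morphism iW Hd).

Section DerivationsAsDualSections.
Variables (A W : comPzRingType) (iW : {rmorphism A -> W}) (d : A -> A)
  (Hd : is_derivation d).

Lemma diff_alg_dual_hom (dW : W -> W) :
  diff_alg iW d dW ->
  is_Aalg_hom iW (dual_lift iW Hd) (fun w => (w, dW w) : dualnum W).
Proof.
move=> [[dWD dWM] dWi]; split; [|split; [|split]].
- by move=> x y; rewrite dWD.
- by move=> x y; rewrite dWM dualnum_mulE /= addrC.
- by rewrite (derivation1 (conj dWD dWM)).
- by move=> a; rewrite dWi.
Qed.

Lemma dual_hom_fst (V : comPzRingType) (iV : A -> V) (g : V -> dualnum W) :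
  is_Aalg_hom iV (dual_lift iW Hd) g -> is_Aalg_hom iV iW (fun v => (g v).1).
Proof.
move=> [gD [gM [g1 gi]]]; split; [|split; [|split]].
- by move=> x y; rewrite gD.
- by move=> x y; rewrite gM.
- by rewrite g1.
- by move=> a; rewrite gi.
Qed.

Lemma dual_hom_diff_alg (g : W -> dualnum W) :
  is_Aalg_hom iW (dual_lift iW Hd) g -> (forall w, (g w).1 = w) ->
  diff_alg iW d (fun w => (g w).2).
Proof.
move=> [gD [gM [_ gi]]] g1; split; first split.
- by move=> x y; rewrite gD.
- by move=> x y; rewrite gM dualnum_mulE /= !g1 addrC.
- by move=> a; rewrite gi.
Qed.

End DerivationsAsDualSections.

Section Basis.
Variables (A B : comPzRingType) (iB : {rmorphism A -> B}) (n : nat)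
  (e : 'I_n -> B) (coord : B -> 'I_n -> A) (Hbasis : is_basis iB e coord).

Let coordK u : u = \sum_i iB (coord u i) * e i := proj1 Hbasis u.
Let coord_comb (x : 'I_n -> A) k : coord (\sum_i iB (x i) * e i) k = x k :=
  proj2 Hbasis x k.

Lemma coord0 k : coord 0 k = 0.
Proof.
rewrite -(coord_comb (fun _ => 0) k); congr coord.
by rewrite big1 // => i _; rewrite rmorph0 mul0r.
Qed.

Lemma coordD u v k : coord (u + v) k = coord u k + coord v k.
Proof.
have -> : u + v = \sum_i iB (coord u i + coord v i) * e i.
  rewrite {1}(coordK u) {1}(coordK v) -big_split /=.
  by apply: eq_bigr => i _; rewrite rmorphD mulrDl.
exact: coord_comb.
Qed.

Lemma coord_sum (I : Type) (r : seq I) (P : pred I) (F : I -> B) k :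
  coord (\sum_(i <- r | P i) F i) k = \sum_(i <- r | P i) coord (F i) k.
Proof. exact: (big_morph (coord^~ k) (fun u v => coordD u v k) (coord0 k)). Qed.

Lemma coordZ a u k : coord (iB a * u) k = a * coord u k.
Proof.
rewrite {1}(coordK u) big_distrr /=.
under eq_bigr do rewrite mulrA -rmorphM.
exact: coord_comb.
Qed.

Lemma coord_mulr_e u j k :
  coord (u * e j) k = \sum_i coord u i * coord (e i * e j) k.
Proof.
rewrite {1}(coordK u) big_distrl coord_sum /=.
by apply: eq_bigr => i _; rewrite -mulrA coordZ.
Qed.

Lemma coord_mull_e u j k :
  coord (e j * u) k = \sum_i coord u i * coord (e j * e i) k.
Proof.
rewrite mulrC coord_mulr_e.
by apply: eq_bigr => i _; rewrite [e j * _]mulrC.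
Qed.

Variables (d : A -> A) (delta : B -> B) (Hdelta : diff_alg iB d delta).

Lemma coord_delta u k :
  coord (delta u) k = d (coord u k) + \sum_i coord u i * coord (delta (e i)) k.
Proof.
have [[deltaD deltaM] deltaA] := Hdelta.
rewrite {1}(coordK u) (derivation_sum (conj deltaD deltaM)).
under eq_bigr do rewrite deltaM deltaA.
by rewrite big_split coordD coord_comb coord_sum; under eq_bigr do rewrite coordZ.
Qed.

(* Leibniz's rule for [delta (e a * e b)], read off in coordinates. *)
Lemma structure_constants_delta a b k :
  \sum_i coord (e a * e b) i * coord (delta (e i)) k =
    \sum_l coord (delta (e a)) l * coord (e l * e b) k
  + \sum_l coord (delta (e b)) l * coord (e a * e l) k
  - d (coord (e a * e b) k).
Proof.
have := coord_delta (e a * e b) k.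
rewrite (proj2 (proj1 Hdelta)) coordD coord_mulr_e coord_mull_e => ->.
by rewrite addrAC subrr add0r.
Qed.

End Basis.

Section TensorDelta.
Variables (A B C : comPzRingType) (n : nat) (e : 'I_n -> B)
  (coord : B -> 'I_n -> A) (iC : A -> C).

(* [sum_i x_i (x) delta (e_i)], in coordinates. *)
Definition tdelta (delta : B -> B) (x : 'I_n -> C) (k : 'I_n) : C :=
  \sum_i x i * iC (coord (delta (e i)) k).

Lemma tderE dC delta x k :
  tder e coord iC dC delta x k = dC (x k) + tdelta delta x k.
Proof. by []. Qed.

Lemma eq_tdelta delta x y :
  (forall i, x i = y i) -> forall k, tdelta delta x k = tdelta delta y k.
Proof. by move=> xy k; apply: eq_bigr => i _; rewrite xy. Qed.

Lemma tdeltaD delta x y k :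
  tdelta delta (fun i => x i + y i) k = tdelta delta x k + tdelta delta y k.
Proof. by rewrite -big_split; apply: eq_bigr => i _; rewrite mulrDl. Qed.

Lemma tmulBl x x' y k :
  tmul e coord iC (fun i => x i - x' i) y k =
  tmul e coord iC x y k - tmul e coord iC x' y k.
Proof.
rewrite -sumrB; apply: eq_bigr => i _.
by rewrite -sumrB; apply: eq_bigr => j _; rewrite mulrBl mulrBl.
Qed.

Lemma tmulBr x y y' k :
  tmul e coord iC x (fun j => y j - y' j) k =
  tmul e coord iC x y k - tmul e coord iC x y' k.
Proof.
rewrite -sumrB; apply: eq_bigr => i _.
by rewrite -sumrB; apply: eq_bigr => j _; rewrite mulrBr mulrBl.
Qed.

End TensorDelta.

Arguments eq_tdelta {A B C n e coord iC delta x y}.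

Section TensorLeibniz.
Variables (A B C : comPzRingType) (iB : {rmorphism A -> B}) (n : nat)
  (e : 'I_n -> B) (coord : B -> 'I_n -> A) (Hbasis : is_basis iB e coord)
  (iC : {rmorphism A -> C}) (d : A -> A) (delta : B -> B)
  (Hdelta : diff_alg iB d delta).

Local Notation tm := (tmul e coord iC).
Local Notation td := (tdelta e coord iC delta).

Lemma tdelta_tmul x y k :
  td (tm x y) k = tm (td x) y k + tm x (td y) k
    - \sum_a \sum_b x a * y b * iC (d (coord (e a * e b) k)).
Proof.
have -> : td (tm x y) k = \sum_a \sum_b x a * y b *
    iC (\sum_i coord (e a * e b) i * coord (delta (e i)) k).
  rewrite /tdelta /tmul; under eq_bigr do rewrite big_distrl /=.
  rewrite exchange_big; apply: eq_bigr => a _ /=.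
  under eq_bigr do rewrite big_distrl /=.
  rewrite exchange_big; apply: eq_bigr => b _ /=.
  rewrite rmorph_sum big_distrr; apply: eq_bigr => i _ /=.
  by rewrite rmorphM mulrA.
under eq_bigr do under eq_bigr do
  rewrite (structure_constants_delta Hbasis Hdelta) rmorphB rmorphD mulrBr mulrDr.
under eq_bigr do rewrite sumrB big_split /=.
rewrite sumrB big_split /=; congr (_ + _ - _); rewrite /tmul /tdelta.
- under [RHS]eq_bigr do under eq_bigr do rewrite !big_distrl /=.
  under [RHS]eq_bigr do rewrite exchange_big /=.
  rewrite [RHS]exchange_big /=; apply: eq_bigr => a _.
  rewrite exchange_big /=; apply: eq_bigr => b _.
  rewrite rmorph_sum big_distrr /=; apply: eq_bigr => l _.
  by rewrite rmorphM; ring.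
- apply: eq_bigr => a _.
  under [RHS]eq_bigr do rewrite big_distrr !big_distrl /=.
  rewrite [RHS]exchange_big /=; apply: eq_bigr => b _.
  rewrite rmorph_sum big_distrr /=; apply: eq_bigr => l _.
  by rewrite rmorphM; ring.
Qed.

End TensorLeibniz.

Lemma tmul_dualnum (A B C : comPzRingType) (n : nat) (e : 'I_n -> B)
  (coord : B -> 'I_n -> A) (iC : {rmorphism A -> C}) (d : A -> A)
  (Hd : is_derivation d) (x y : 'I_n -> dualnum C) k :
  tmul e coord (dual_lift iC Hd) x y k =
  (tmul e coord iC (fun i => (x i).1) (fun j => (y j).1) k,
   tmul e coord iC (fun i => (x i).2) (fun j => (y j).1) k
   + tmul e coord iC (fun i => (x i).1) (fun j => (y j).2) k
   + \sum_i \sum_j (x i).1 * (y j).1 * iC (d (coord (e i * e j) k))).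
Proof.
rewrite /tmul dualnum_sumE; congr pair.
  by apply: eq_bigr => i _; rewrite dualnum_sumE.
rewrite -!big_split; apply: eq_bigr => i _.
rewrite dualnum_sumE -!big_split; apply: eq_bigr => j _ /=.
by ring.
Qed.

Section WeilDescent.
Variables (A : comPzRingType) (d : A -> A) (Hd : is_derivation d)
  (B : comPzRingType) (iB : {rmorphism A -> B}) (n : nat) (e : 'I_n -> B)
  (coord : B -> 'I_n -> A) (Hbasis : is_basis iB e coord)
  (D : comPzRingType) (iD : {rmorphism B -> D}) (dD : D -> D)
  (W : comPzRingType) (iW : {rmorphism A -> W}) (WD : D -> 'I_n -> W)
  (HW : is_weil_descent e coord iD iW WD).

Lemma weil_descent_endo_id (h : W -> W) :
  is_Aalg_hom iW iW h -> (forall x k, h (WD x k) = WD x k) -> forall w, h w = w.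
Proof.
move=> hA hWD w.
have [g [_ g_uniq]] := proj2 HW W iW WD (proj1 HW).
have idA : is_Aalg_hom iW iW id by [].
by rewrite (g_uniq h hA hWD) -(g_uniq id idA).
Qed.

Section FixedDelta.
Variables (delta : B -> B) (Hdelta : diff_alg iB d delta)
  (HD : diff_alg iD delta dD).

Lemma tdelta_weil (X : 'I_n -> W) k :
  tdelta e coord iW delta X k = \sum_i X i * WD (dD (iD (e i))) k.
Proof.
have [[_ [_ WD1]] _] := HW.
by apply: eq_bigr => i _; rewrite (proj2 HD) WD1.
Qed.

Definition weil_dual_lift (x : D) (k : 'I_n) : dualnum W :=
  (WD x k, WD (dD x) k - tdelta e coord iW delta (WD x) k).

Lemma weil_dual_lift_Balg_hom :
  is_Balg_hom e coord (dual_lift iW Hd) iD weil_dual_lift.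
Proof.
have [[WDD [WDM WD1]] _] := HW; have [[dDD dDM] dDA] := HD.
rewrite /weil_dual_lift; split; [|split].
- move=> x y k; rewrite (eq_tdelta (WDD x y)) tdeltaD dDD !WDD.
  by rewrite dualnum_addE /=; congr pair; ring.
- move=> x y k; rewrite tmul_dualnum /= (eq_tdelta (WDM x y)).
  rewrite (tdelta_tmul Hbasis _ Hdelta) dDM WDD !WDM tmulBl tmulBr.
  by congr pair; ring.
- move=> b k; rewrite dDA (eq_tdelta (WD1 b)) !WD1 /tembB /tdelta.
  rewrite (coord_delta Hbasis Hdelta) rmorphD rmorph_sum.
  by under eq_bigr do rewrite rmorphM; rewrite addrK.
Qed.

Lemma tmap_weil_dual_lift (dW : W -> W) x k :
  tmap (fun w => (w, dW w) : dualnum W) (WD x) k = weil_dual_lift x k <->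
  WD (dD x) k = tder e coord iW dW delta (WD x) k.
Proof.
rewrite /tmap /weil_dual_lift tderE.
by split=> [[->] | ->]; [rewrite subrK | rewrite addrK].
Qed.

Lemma weil_derivation_exists_unique : exists dW : W -> W,
  weil_derivation e coord iW d delta dD WD dW /\
  forall dW', weil_derivation e coord iW d delta dD WD dW' ->
    forall w, dW' w = dW w.
Proof.
have [g [[gA gWD] g_uniq]] :=
  proj2 HW _ (dual_lift iW Hd) _ weil_dual_lift_Balg_hom.
have g1 w : (g w).1 = w.
  apply: (weil_descent_endo_id (h := fun v => (g v).1)).
    exact: dual_hom_fst gA.
  by move=> x k; have := gWD x k; rewrite /tmap => ->.
exists (fun w => (g w).2); split.
- split; first exact: dual_hom_diff_alg gA g1.
  move=> x k; apply/tmap_weil_dual_lift.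
  by rewrite /tmap -{1}(g1 (WD x k)) -surjective_pairing; apply: gWD.
- move=> dW' [dW'A dW'WD] w.
  have g'A := diff_alg_dual_hom Hd dW'A.
  have g'WD x k := proj2 (tmap_weil_dual_lift dW' x k) (dW'WD x k).
  by have := g_uniq _ g'A g'WD w; case: (g w) => ? ? [_ ->].
Qed.

End FixedDelta.

Lemma weil_derivation_delta_irrelevant (delta delta' : B -> B) (dW : W -> W) :
  diff_alg iD delta dD -> diff_alg iD delta' dD ->
  weil_derivation e coord iW d delta dD WD dW ->
  weil_derivation e coord iW d delta' dD WD dW.
Proof.
move=> HD HD' [dWA dWWD]; split=> // x k.
by rewrite dWWD !tderE (tdelta_weil HD) (tdelta_weil HD').
Qed.

End WeilDescent.

Theorem theorem3p2
  (A : comPzRingType) (d : A -> A) (Hd : is_derivation d)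
  (B : comPzRingType) (iB : {rmorphism A -> B})
  (n : nat) (e : 'I_n -> B) (coord : B -> 'I_n -> A)
  (Hbasis : is_basis iB e coord)
  (delta : B -> B) (Hdelta : diff_alg iB d delta)
  (D : comPzRingType) (iD : {rmorphism B -> D})
  (dD : D -> D) (HD : diff_alg iD delta dD)
  (W : comPzRingType) (iW : {rmorphism A -> W}) (WD : D -> 'I_n -> W)
  (HW : is_weil_descent e coord iD iW WD) :
  (exists dW : W -> W,
     weil_derivation e coord iW d delta dD WD dW /\
     forall dW' : W -> W,
       weil_derivation e coord iW d delta dD WD dW' -> forall w, dW' w = dW w)
  /\
  (forall delta' : B -> B, diff_alg iB d delta' -> diff_alg iD delta' dD ->
     forall dW dW' : W -> W,
       weil_derivation e coord iW d delta dD WD dW ->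
       weil_derivation e coord iW d delta' dD WD dW' ->
       forall w, dW w = dW' w).
Proof.
split; first exact: (weil_derivation_exists_unique Hd Hbasis HW Hdelta HD).
move=> delta' Hdelta' HD' dW dW' HdW HdW' w.
have [dW0 [_ uniq]] := weil_derivation_exists_unique Hd Hbasis HW Hdelta' HD'.
have HdW_delta' := weil_derivation_delta_irrelevant HW HD HD' HdW.
by rewrite (uniq _ HdW_delta') (uniq _ HdW').
Qed.
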